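(* Let $\bm S_0\in U(2N_0)$. Then $U_1=\{\bm M\in U(2N_0):\det(\bm S_0-\bm M)\ne0\}$ is path-connected. If $\bm S_0=\bm S_0^T$, then $U_2=\{\bm M\in U_1:\bm M=\bm M^T\}$ is path-connected. If $\bm S_0=\bm S_0^P$, then $U_3=\{\bm M\in U_1:\bm M=\bm M^P\}$ is path-connected. If $\bm S_0=\bm S_0^T=\bm S_0^P$, then $U_4=\{\bm M\in U_1:\bm M=\bm M^T=\bm M^P\}$ is path-connected.
   Context: $N_0\ge1$ integer; $U(n)$ the unitary group; $\bm M^T$ the transpose; $\bm M^P:=\bm R_{2N_0}\bm M\bm R_{2N_0}$ with $\bm R_{2N_0}=\begin{bmatrix}0&\bm I_{N_0}\\\bm I_{N_0}&0\end{bmatrix}$. *)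

From HB Require Import structures.
From mathcomp Require Import all_boot all_order all_algebra.
From mathcomp Require Import all_classical all_reals all_analysis.
From mathcomp Require Import complex.
Set Implicit Arguments. Unset Strict Implicit. Unset Printing Implicit Defensive.
Import Order.TTheory GRing.Theory Num.Theory.
Import numFieldTopology.Exports numFieldNormedType.Exports.
Local Open Scope classical_set_scope.
Local Open Scope ring_scope.

(* topology on C = R[i]: the metric topology of the complex modulus
   (ball x e = [set y | `|x - y| < e]); matrices get the product topology *)
HB.instance Definition _ (R : rcfType) :=
  PseudoPointedMetric.copy R[i] (R[i] : numClosedFieldType)^o.

Definition adjmx (R : rcfType) (m n : nat) (A : 'M[R[i]]_(m, n)) : 'M[R[i]]_(n, m) :=
  (map_mx (fun z : R[i] => z^*) A)^T.

Definition unitary_group (R : rcfType) (n : nat) : set 'M[R[i]]_n :=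
  [set M | M *m adjmx M = 1%:M].

Definition Rswap (R : rcfType) (N0 : nat) : 'M[R[i]]_(N0 + N0) :=
  block_mx 0 1%:M 1%:M 0.

Definition Ptransp (R : rcfType) (N0 : nat) (M : 'M[R[i]]_(N0 + N0)) :
  'M[R[i]]_(N0 + N0) := Rswap R N0 *m M *m Rswap R N0.

Definition path_connected (R : realType) (T : topologicalType) (S : set T) : Prop :=
  forall x y, S x -> S y ->
  exists g : R -> T, {within `[0, 1], continuous g} /\
    g 0 = x /\ g 1 = y /\ g @` `[0, 1] `<=` S.

From HB Require Import structures.
From mathcomp Require Import all_boot all_order all_algebra.
From mathcomp Require Import all_classical all_reals all_analysis.
From mathcomp Require Import complex.
Import Order.TTheory GRing.Theory Num.Theory.
Import numFieldTopology.Exports numFieldNormedType.Exports.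
Local Open Scope classical_set_scope.
Local Open Scope ring_scope.
Set Implicit Arguments.

(* The Cayley transform [H |-> S (H + i)^-1 (H - i)] maps the Hermitian matrices
   onto the unitary [M] with [det (S - M) != 0], with inverse
   [M |-> 2i (S - M)^-1 S - i].  For [S = S^T] the symmetric [M] correspond to
   the [H] with [H^T S = S H]; for [S = S^P] the [M] with [M = M^P] correspond
   to the [H] commuting with the involution [R_2N0].  Each of these parameter
   sets is closed under real affine combinations, so the image of the segment
   between the parameters of two points is a path joining them. *)

Section ConjugateTranspose.
Context {R : rcfType}.
Local Notation C := R[i].

Lemma adjmx_mul m n p (A : 'M[C]_(m, n)) (B : 'M[C]_(n, p)) :
  adjmx (A *m B) = adjmx B *m adjmx A.
Proof. by rewrite /adjmx map_mxM trmx_mul. Qed.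

Lemma adjmxD m n (A B : 'M[C]_(m, n)) : adjmx (A + B) = adjmx A + adjmx B.
Proof. by rewrite /adjmx map_mxD linearD. Qed.

Lemma adjmxB m n (A B : 'M[C]_(m, n)) : adjmx (A - B) = adjmx A - adjmx B.
Proof. by rewrite /adjmx map_mxB linearB. Qed.

Lemma adjmxZ m n a (A : 'M[C]_(m, n)) : adjmx (a *: A) = a^* *: adjmx A.
Proof. by rewrite /adjmx map_mxZ linearZ. Qed.

Lemma adj_scalar_mx n a : adjmx (a%:M : 'M[C]_n) = (a^*)%:M.
Proof. by rewrite /adjmx map_scalar_mx tr_scalar_mx. Qed.

Lemma adjmxK m n (A : 'M[C]_(m, n)) : adjmx (adjmx A) = A.
Proof. by apply/matrixP => i j; rewrite !mxE conjCK. Qed.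

Lemma adjmx_inv n (A : 'M[C]_n) : adjmx (invmx A) = invmx (adjmx A).
Proof. by rewrite /adjmx map_invmx trmx_inv. Qed.

Lemma row_adj_eq0 n (v : 'rV[C]_n) : v *m adjmx v = 0 -> v = 0.
Proof.
move=> /matrixP /(_ 0 0); rewrite !mxE => vv0; apply/rowP => j; rewrite mxE.
have /psumr_eq0P vj0 : \sum_k v 0 k * (v 0 k)^* = 0.
  by rewrite -[RHS]vv0; apply: eq_bigr => k _; rewrite !mxE.
by apply/eqP; rewrite -mul_conjC_eq0; apply/eqP/vj0 => // k _; exact: mul_conjC_ge0.
Qed.

Definition hermitian {n} : set 'M[C]_n := [set H | adjmx H = H].

Lemma unitmx_hermitian_sub_scalar n (H : 'M[C]_n) (c : C) :
  hermitian H -> c^* != c -> H - c%:M \in unitmx.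
Proof.
move=> hH c_nonreal; rewrite -row_free_unit; apply: inj_row_free => v vHc0.
have vH : v *m H = c *: v by apply/eqP; rewrite -subr_eq0 -mul_mx_scalar -mulmxBr vHc0.
have /eqP : adjmx (v *m H *m adjmx v) = v *m H *m adjmx v.
  by rewrite !adjmx_mul adjmxK hH mulmxA.
rewrite vH -scalemxAl adjmxZ adjmx_mul adjmxK -subr_eq0 -scalerBl scaler_eq0.
by rewrite subr_eq0 (negbTE c_nonreal) => /eqP /row_adj_eq0.
Qed.

Lemma conjCi_neq : ('i : C)^* != 'i.
Proof. by rewrite conjCi eqNr neq0Ci. Qed.

Lemma unitmx_hermitian_subi n (H : 'M[C]_n) : hermitian H -> H - 'i%:M \in unitmx.
Proof. by move=> hH; apply: unitmx_hermitian_sub_scalar hH conjCi_neq. Qed.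

Lemma unitmx_hermitian_addi n (H : 'M[C]_n) : hermitian H -> H + 'i%:M \in unitmx.
Proof.
move=> hH; have -> : H + 'i%:M = H - (- 'i)%:M by rewrite raddfN opprK.
by apply: unitmx_hermitian_sub_scalar hH _; rewrite rmorphN eqr_opp conjCi_neq.
Qed.

End ConjugateTranspose.

Section CommutingAndIntertwining.
Context {F : comUnitRingType} {n : nat}.
Implicit Types Q S A : 'M[F]_n.

Lemma comm_mx_inv Q A : comm_mx Q A -> comm_mx Q (invmx A).
Proof.
rewrite /comm_mx => QA; have [Au|Anu] := boolP (A \in unitmx); last by rewrite invmx_out.
rewrite -[RHS]mulmx1 -(mulmxV Au) !mulmxA -(mulmxA _ Q A) QA mulmxA mulVmx //.
by rewrite mul1mx.
Qed.

Lemma tr_invmx_intertwine S A : A^T *m S = S *m A -> (invmx A)^T *m S = S *m invmx A.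
Proof.
move=> AS; have [Au|Anu] := boolP (A \in unitmx); last by rewrite invmx_out.
rewrite trmx_inv -[LHS]mulmx1 -(mulmxV Au) !mulmxA -(mulmxA _ S A) -AS mulmxA.
by rewrite mulVmx ?unitmx_tr // mul1mx.
Qed.

End CommutingAndIntertwining.

Section Cayley.
Context {R : rcfType} {n : nat}.
Local Notation C := R[i].
Implicit Types S H M Q : 'M[C]_n.

Definition cayley S H := S *m invmx (H + 'i%:M) *m (H - 'i%:M).

Definition inv_cayley S M := 'i *+ 2 *: (invmx (S - M) *m S) - 'i%:M.

Lemma comm_mx_addi_subi H : comm_mx (H + 'i%:M) (H - 'i%:M).
Proof.
apply: comm_mxB; last exact: comm_mx_scalar.
by apply/comm_mx_sym/comm_mxD; [exact: comm_mx_refl | exact: comm_mx_scalar].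
Qed.

Lemma cayley_unitary S H :
  unitary_group S -> hermitian H -> unitary_group (cayley S H).
Proof.
move=> uS hH; have Au := unitmx_hermitian_addi hH; have Bu := unitmx_hermitian_subi hH.
have adjA : adjmx (H + 'i%:M) = H - 'i%:M by rewrite adjmxD hH adj_scalar_mx conjCi raddfN.
have adjB : adjmx (H - 'i%:M) = H + 'i%:M.
  by rewrite adjmxB hH adj_scalar_mx conjCi raddfN opprK.
rewrite /unitary_group /= !adjmx_mul adjmx_inv adjA adjB !mulmxA.
rewrite -(mulmxA _ (H - 'i%:M)) -comm_mx_addi_subi mulmxA (mulmxKV Au) (mulmxK Bu).
exact: uS.
Qed.

Lemma det_sub_cayley_neq0 S H :
  S \in unitmx -> hermitian H -> \det (S - cayley S H) != 0.
Proof.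
move=> Su hH; have Au := unitmx_hermitian_addi hH.
have -> : S - cayley S H = S *m invmx (H + 'i%:M) *m ('i *+ 2)%:M.
  rewrite /cayley -{1}[S](mulmxKV Au) -mulmxBr raddfMn mulr2n /=.
  by congr (_ *m _); rewrite opprB addrC addrA subrK.
rewrite -unitfE -unitmxE !unitmx_mul Su unitmx_inv Au unitmxE det_scalar.
by rewrite unitrX // unitfE mulrn_eq0 neq0Ci.
Qed.

Lemma inv_cayleyK S M :
  S \in unitmx -> S - M \in unitmx -> cayley S (inv_cayley S M) = M.
Proof.
move=> Su Yu; set Z := invmx (S - M) *m S.
have Zu : Z \in unitmx by rewrite unitmx_mul unitmx_inv Yu.
have SZ : S *m invmx Z = S - M by rewrite -{1}[S](mulKVmx Yu) mulmxK.
have c_neq0 : 'i *+ 2 != 0 :> C by rewrite mulrn_eq0 neq0Ci.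
rewrite /cayley /inv_cayley subrK -[_ - _ - _]addrA -opprD -raddfD /= -mulr2n.
rewrite -scalemx1 -scalerBr invmxZ ?unitmxZ ?unitfE //.
rewrite -!scalemxAr -scalemxAl scalerA mulfV // scale1r -/Z mulmxBr mulmx1 mulmxKV //.
by rewrite SZ opprB addrC subrK.
Qed.

Lemma hermitian_inv_cayley S M : unitary_group S -> unitary_group M ->
  S - M \in unitmx -> hermitian (inv_cayley S M).
Proof.
move=> uS uM Yu; set Y := S - M; set Z := invmx Y *m S.
have YZ : Y *m Z = S by rewrite mulKVmx.
have adjYu : adjmx Y \in unitmx by rewrite /adjmx unitmx_tr map_unitmx.
(* [Y (Z + Z^* ) Y^* = S Y^* + Y S^* = 2 - S M^* - M S^* = Y Y^*] *)
have ZZ' : Z + adjmx Z = 1%:M.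
  apply: (can_inj (mulKmx Yu)); apply: (can_inj (mulmxK adjYu)) => /=.
  rewrite -/Y mulmx1 mulmxDr mulmxDl YZ -mulmxA -adjmx_mul YZ /Y adjmxB.
  move: uS uM; rewrite /unitary_group /= => uS uM.
  by rewrite !mulmxBr !mulmxBl uS uM opprB addrC.
rewrite /hermitian /= /inv_cayley -/Y -/Z adjmxB adjmxZ adj_scalar_mx.
have -> : adjmx Z = 1%:M - Z by rewrite -ZZ' addrC addKr.
rewrite rmorphMn /= conjCi mulNrn scaleNr scalerBr opprB scalemx1 raddfN opprK.
by rewrite raddfMn mulr2n /= opprD addrA subrK.
Qed.

Lemma tr_cayley S H :
  S^T = S -> H^T *m S = S *m H -> (cayley S H)^T = cayley S H.
Proof.
move=> sS HS.
have HiS : (H + 'i%:M)^T *m S = S *m (H + 'i%:M).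
  by rewrite linearD /= tr_scalar_mx mulmxDl mulmxDr HS scalar_mxC.
have HNiS : (H - 'i%:M)^T *m S = S *m (H - 'i%:M).
  by rewrite linearB /= tr_scalar_mx mulmxBl mulmxBr HS scalar_mxC.
rewrite /cayley !trmx_mul sS -mulmxA (tr_invmx_intertwine HiS) [LHS]mulmxA HNiS.
by rewrite -!mulmxA (comm_mx_inv (comm_mx_sym (comm_mx_addi_subi H))).
Qed.

Lemma tr_inv_cayley S M :
  S^T = S -> M^T = M -> (inv_cayley S M)^T *m S = S *m inv_cayley S M.
Proof.
move=> sS sM; rewrite /inv_cayley linearB linearZ /= trmx_mul trmx_inv linearB /=.
by rewrite sS sM tr_scalar_mx mulmxBl mulmxBr -scalemxAl -scalemxAr !mulmxA scalar_mxC.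
Qed.

Lemma comm_mx_cayley Q S H : comm_mx Q S -> comm_mx Q H -> comm_mx Q (cayley S H).
Proof.
move=> QS QH; apply: comm_mxM; first apply: comm_mxM => //.
  by apply/comm_mx_inv/comm_mxD => //; exact: comm_mx_scalar.
by apply: comm_mxB => //; exact: comm_mx_scalar.
Qed.

Lemma comm_mx_inv_cayley Q S M :
  comm_mx Q S -> comm_mx Q M -> comm_mx Q (inv_cayley S M).
Proof.
move=> QS QM; apply: comm_mxB; last exact: comm_mx_scalar.
rewrite -mul_scalar_mx; apply: comm_mxM; first exact: comm_mx_scalar.
by apply: comm_mxM => //; apply/comm_mx_inv/comm_mxB.
Qed.

End Cayley.

Lemma Rswap_sqr (R : rcfType) N0 : Rswap R N0 *m Rswap R N0 = 1%:M.
Proof.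
rewrite /Rswap mulmx_block !mul0mx !mulmx0 !mul1mx !add0r !addr0.
by rewrite -scalar_mx_block.
Qed.

Lemma Ptransp_fixedP (R : rcfType) N0 (M : 'M[R[i]]_(N0 + N0)) :
  Ptransp M = M <-> comm_mx (Rswap R N0) M.
Proof.
rewrite /Ptransp /comm_mx; split => [eM | QM].
  by rewrite -{1}eM !mulmxA Rswap_sqr mul1mx.
by rewrite QM -mulmxA Rswap_sqr mulmx1.
Qed.

Section CayleyCompatibility.
Context {R : rcfType} {n : nat}.
Local Notation C := R[i].
Implicit Types (S H M Q : 'M[C]_n) (K P : set 'M[C]_n).

Definition real_affine K :=
  forall H1 H2 (t : R), K H1 -> K H2 -> K (H1 + (t%:C)%C *: (H2 - H1)).

Lemma real_affineI K1 K2 :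
  real_affine K1 -> real_affine K2 -> real_affine (K1 `&` K2).
Proof. by move=> aK1 aK2 H1 H2 t [? ?] [? ?]; split; [apply: aK1 | apply: aK2]. Qed.

Lemma real_affine_hermitian : real_affine hermitian.
Proof.
move=> H1 H2 t hH1 hH2; rewrite /hermitian /= adjmxD adjmxZ adjmxB hH1 hH2.
by rewrite conj_Creal // complex_real.
Qed.

Lemma real_affine_comm Q : real_affine [set H | comm_mx Q H].
Proof.
move=> H1 H2 t QH1 QH2; apply: comm_mxD => //.
by rewrite -mul_scalar_mx; apply: comm_mxM; [exact: comm_mx_scalar | exact: comm_mxB].
Qed.

Lemma real_affine_intertwine S : real_affine [set H | H^T *m S = S *m H].
Proof.
move=> H1 H2 t /= H1S H2S.
rewrite linearD linearZ linearB /= mulmxDl mulmxDr -scalemxAl -scalemxAr.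
by rewrite mulmxBl mulmxBr H1S H2S.
Qed.

Definition cayley_compatible S K P :=
  (forall H, hermitian H -> K H -> P (cayley S H)) /\
  (forall M, unitary_group M -> \det (S - M) != 0 -> P M -> K (inv_cayley S M)).

Lemma cayley_compatibleI S K1 K2 P1 P2 :
  cayley_compatible S K1 P1 -> cayley_compatible S K2 P2 ->
  cayley_compatible S (K1 `&` K2) (P1 `&` P2).
Proof.
move=> [KP1 PK1] [KP2 PK2]; split.
  by move=> H hH [K1H K2H]; split; [apply: KP1 | apply: KP2].
by move=> M uM dM [P1M P2M]; split; [apply: PK1 | apply: PK2].
Qed.

Lemma cayley_compatible_tr S :
  S^T = S -> cayley_compatible S [set H | H^T *m S = S *m H] [set M | M = M^T].
Proof.
move=> sS; split=> [H _ HS | M _ _ sM] /=; first by rewrite tr_cayley.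
exact: tr_inv_cayley.
Qed.

Lemma cayley_compatible_comm S Q :
  comm_mx Q S -> cayley_compatible S [set H | comm_mx Q H] [set M | comm_mx Q M].
Proof.
move=> QS; split=> [H _ | M _ _] /=; first exact: comm_mx_cayley.
exact: comm_mx_inv_cayley.
Qed.

End CayleyCompatibility.

Lemma cayley_compatible_Ptransp (R : rcfType) N0 (S : 'M[R[i]]_(N0 + N0)) :
  Ptransp S = S ->
  cayley_compatible S [set H | comm_mx (Rswap R N0) H] [set M | M = Ptransp M].
Proof.
move=> /Ptransp_fixedP /cayley_compatible_comm [KP PK]; split.
  by move=> H hH KH; apply/esym/Ptransp_fixedP; exact: KP.
by move=> M uM dM /esym /Ptransp_fixedP; exact: PK.
Qed.

Section EntrywiseContinuity.
Context {K : numFieldType} {T : topologicalType}.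

Definition entry_continuous m p (f : T -> 'M[K]_(m, p)) :=
  forall i j, continuous (fun t => f t i j).

Lemma continuous_entrywise m p (f : T -> 'M[K]_(m, p)) :
  entry_continuous f -> continuous f.
Proof.
move=> hf t A [P hP sub]; apply: (filterS sub).
by apply: filter_forall => i; apply: filter_forall => j; exact: hf.
Qed.

Lemma entry_continuous_cst m p (A : 'M[K]_(m, p)) : entry_continuous (fun=> A).
Proof. by move=> i j; exact: cst_continuous. Qed.

Lemma entry_continuousD m p (f g : T -> 'M[K]_(m, p)) :
  entry_continuous f -> entry_continuous g -> entry_continuous (fun t => f t + g t).
Proof.
move=> hf hg i j; under eq_fun do rewrite mxE.
by move=> t; apply: continuousD; [exact: hf | exact: hg].
Qed.

Lemma entry_continuousZ m p (a : T -> K) (f : T -> 'M[K]_(m, p)) :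
  continuous a -> entry_continuous f -> entry_continuous (fun t => a t *: f t).
Proof.
move=> ha hf i j; under eq_fun do rewrite mxE.
by move=> t; apply: continuousM; [exact: ha | exact: hf].
Qed.

Lemma continuous_sum (I : Type) (r : seq I) (P : pred I) (F : I -> T -> K) :
  (forall i, continuous (F i)) -> continuous (fun t => \sum_(i <- r | P i) F i t).
Proof. by move=> hF; apply: continuous_big => [|i _]; [exact: add_continuous | exact: hF]. Qed.

Lemma continuous_prod (I : Type) (r : seq I) (P : pred I) (F : I -> T -> K) :
  (forall i, continuous (F i)) -> continuous (fun t => \prod_(i <- r | P i) F i t).
Proof. by move=> hF; apply: continuous_big => [|i _]; [exact: mul_continuous | exact: hF]. Qed.

Lemma entry_continuous_mul m p q (f : T -> 'M[K]_(m, p)) (g : T -> 'M[K]_(p, q)) :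
  entry_continuous f -> entry_continuous g -> entry_continuous (fun t => f t *m g t).
Proof.
move=> hf hg i j; under eq_fun do rewrite mxE.
by apply: continuous_sum => k t; apply: continuousM; [exact: hf | exact: hg].
Qed.

Lemma continuous_det n (f : T -> 'M[K]_n) :
  entry_continuous f -> continuous (fun t => \det (f t)).
Proof.
move=> hf; apply: continuous_sum => s t.
apply: (continuousM (s := fun=> _)); first exact: cst_continuous.
by apply: continuous_prod => i; exact: hf.
Qed.

Lemma entry_continuous_adj n (f : T -> 'M[K]_n) :
  entry_continuous f -> entry_continuous (fun t => \adj (f t)).
Proof.
move=> hf i j; under eq_fun do rewrite mxE.
have minor_cont : continuous (fun t => \det (row' j (col' i (f t)))).
  by apply: continuous_det => k l; under eq_fun do rewrite !mxE; exact: hf.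
by move=> t; apply: continuousM (minor_cont t); exact: cst_continuous.
Qed.

Lemma entry_continuous_inv n (f : T -> 'M[K]_n) :
  entry_continuous f -> (forall t, f t \in unitmx) ->
  entry_continuous (fun t => invmx (f t)).
Proof.
move=> hf fu; under eq_fun do rewrite /invmx fu.
apply: entry_continuousZ (entry_continuous_adj hf) => t.
apply: (continuousV (s := fun x => \det (f x))); first by rewrite -unitfE -unitmxE.
exact: continuous_det.
Qed.

End EntrywiseContinuity.

Lemma continuous_real_complex (R : realType) : continuous (fun t : R => (t%:C)%C : R[i]).
Proof.
move=> t; apply/(@cvgrPdist_lt _ R[i]^o) => e e_gt0.
have e_real : e \is Num.real by exact: gtr0_real.
have Re_gt0 : 0 < complex.Re e by rewrite -ltcR RRe_real.
apply: filterS ((@cvgrPdist_lt _ R^o _ _ _ id t).1 cvg_id _ Re_gt0) => s ts.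
rewrite -(RRe_real e_real) -rmorphB /= normc_def /= expr0n /= addr0 sqrtr_sqr ltcR.
exact: ts.
Qed.

Section PathConnected.
Context {R : realType} {n : nat}.
Local Notation C := R[i].
Implicit Types (S H M : 'M[C]_n) (K P : set 'M[C]_n).

Lemma continuous_cayley (T : topologicalType) S (h : T -> 'M[C]_n) :
  entry_continuous h -> (forall t, hermitian (h t)) ->
  continuous (fun t => cayley S (h t)).
Proof.
move=> ch hh; apply: continuous_entrywise; apply: entry_continuous_mul.
  apply: entry_continuous_mul; first exact: entry_continuous_cst.
  apply: entry_continuous_inv => [|t]; last exact: unitmx_hermitian_addi.
  by apply: entry_continuousD ch _; exact: entry_continuous_cst.
by apply: entry_continuousD ch _; exact: entry_continuous_cst.
Qed.

Lemma path_connected_cayley S K P : unitary_group S -> real_affine K ->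
  cayley_compatible S K P ->
  path_connected R ([set M | unitary_group M /\ \det (S - M) != 0] `&` P).
Proof.
move=> uS aK [KP PK] M1 M2 [[uM1 dM1] PM1] [[uM2 dM2] PM2].
have [Su _] := mulmx1_unit uS.
have unit_sub M : \det (S - M) != 0 -> S - M \in unitmx by rewrite unitmxE unitfE.
have aHK := real_affineI real_affine_hermitian aK.
have HK1 : (hermitian `&` K) (inv_cayley S M1).
  by split; [apply: hermitian_inv_cayley; rewrite ?unit_sub | exact: PK].
have HK2 : (hermitian `&` K) (inv_cayley S M2).
  by split; [apply: hermitian_inv_cayley; rewrite ?unit_sub | exact: PK].
pose line t := inv_cayley S M1 + (t%:C)%C *: (inv_cayley S M2 - inv_cayley S M1).
have line_HK t : (hermitian `&` K) (line t) by exact: aHK.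
exists (fun t => cayley S (line t)); split; [|split; [|split]].
- apply/continuous_subspaceT/continuous_cayley => [|t]; last by have [] := line_HK t.
  apply: entry_continuousD; first exact: entry_continuous_cst.
  by apply: entry_continuousZ; [exact: continuous_real_complex | exact: entry_continuous_cst].
- by rewrite /line scale0r addr0 inv_cayleyK ?unit_sub.
- by rewrite /line scale1r addrC subrK inv_cayleyK ?unit_sub.
- move=> _ [t _ <-]; have [hH KH] := line_HK t.
  by split; [split; [exact: cayley_unitary | exact: det_sub_cayley_neq0] | exact: KP].
Qed.

End PathConnected.

Unset Implicit Arguments.

Theorem mainTheorem10 (R : realType) (N0 : nat) (hN0 : (1 <= N0)%N)
  (S0 : 'M[R[i]]_(N0 + N0)) (hS0 : unitary_group S0) :
  let U1 := [set M : 'M[R[i]]_(N0 + N0) | unitary_group M /\ \det (S0 - M) != 0] in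
  path_connected R U1 /\
  (S0 = S0^T -> path_connected R [set M | U1 M /\ M = M^T]) /\
  (S0 = Ptransp S0 -> path_connected R [set M | U1 M /\ M = Ptransp M]) /\
  (S0 = S0^T /\ S0 = Ptransp S0 ->
     path_connected R [set M | U1 M /\ M = M^T /\ M = Ptransp M]).
Proof.
move=> U1; split; [|split; [|split]].
- by rewrite -[U1]setIT; apply: (path_connected_cayley (K := setT)).
- move=> /esym sS0; apply: path_connected_cayley hS0 _ (cayley_compatible_tr sS0).
  exact: real_affine_intertwine.
- move=> /esym pS0; apply: path_connected_cayley hS0 _ (cayley_compatible_Ptransp pS0).
  exact: real_affine_comm.
- move=> [/esym sS0 /esym pS0]; apply: path_connected_cayley hS0 _
    (cayley_compatibleI (cayley_compatible_tr sS0) (cayley_compatible_Ptransp pS0)).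
  by apply: real_affineI; [exact: real_affine_intertwine | exact: real_affine_comm].
Qed.
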